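(* There are constants $C\in(0,\infty)$, $c\in(0,1)$ and, for every $\epsilon>0$, an $N_\epsilon\in\mathbb N$ such that for all $N\ge N_\epsilon$, all $s\in(0,\infty)\cap\frac1{\log N}\mathbb N$ and all $t\in(0,1]\cap\frac1N\mathbb N$, $$\P\big(\tau^{(N)}_{s\log N}=tN\big)\le C\,\frac1N\,\frac st\,t^{(1-\epsilon)s}e^{-cs\log^+(cs)}.$$ Consequently there is $C'\in(0,\infty)$ such that for all $N$ large enough and such $s,t$: $\P(\tau^{(N)}_{s\log N}=tN)\le C'\frac1Nf_{cs}(t)$.
   Context: Positive reals $r(n)=\frac an(1+o(1))$, $a\in(0,\infty)$, $R_N=\sum_{n\le N}r(n)$; $(T^{(N)}_i)$ i.i.d. with $\P(T^{(N)}_i=n)=\frac{r(n)}{R_N}\mathbf1_{\{1,\dots,N\}}(n)$; $\tau^{(N)}_k=\sum_{i\le k}T^{(N)}_i$. $\log^+x=\max(\log x,0)$. $f_s$ is the density of $Y_s$, $Y$ the Dickman subordinator (Lévy measure $\frac1t\mathbf1_{(0,1)}(t)\mathrm dt$); on $(0,1]$, $f_s(t)=\frac{s\,t^{s-1}e^{-\gamma s}}{\Gamma(s+1)}$. *)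

From Stdlib Require Import Factorial Reals Lra ClassicalEpsilon.
Open Scope R_scope.

Fixpoint sumR (n : nat) (f : nat -> R) : R :=
  match n with
  | O => 0
  | S n' => sumR n' f + f n'
  end.

Definition RN (r : nat -> R) (N : nat) : R := sumR N (fun i => r (S i)).

(* P(T^(N) = n) = r(n)/R_N * 1_{1..N}(n) *)
Definition pT (r : nat -> R) (N n : nat) : R :=
  if (Nat.leb 1 n && Nat.leb n N)%bool then r n / RN r N else 0.

(* Law of tau^(N)_k = T_1 + ... + T_k for i.i.d. T_i ~ pT r N:
   probTau r N k m = P(tau^(N)_k = m), computed as the k-fold convolution. *)
Fixpoint probTau (r : nat -> R) (N k m : nat) : R :=
  match k with
  | O => if Nat.eqb m 0 then 1 else 0
  | S k' => sumR (S m) (fun j => probTau r N k' j * pT r N (m - j))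
  end.

Definition logp (x : R) : R := Rmax (ln x) 0.

(* limit of a sequence (chosen classically; meaningful when it converges) *)
Definition lim_seq (u : nat -> R) : R :=
  epsilon (inhabits 0) (fun l => Un_cv u l).

(* Euler's Gamma function via Gauss/Euler limit, for x > 0:
   Gamma(x) = lim n! n^x / (x (x+1) ... (x+n)) *)
Fixpoint prodx (x : R) (n : nat) : R :=
  match n with O => x | S n' => prodx x n' * (x + INR n) end.

Definition GammaR (x : R) : R :=
  lim_seq (fun n => INR (fact n) * Rpower (INR n) x / prodx x n).

Definition EulerGamma : R :=
  lim_seq (fun n => sumR (S n) (fun i => / INR (S i)) - ln (INR (S n))).

(* density of Y_s (Dickman subordinator) on (0,1]:
   f_s(t) = s t^(s-1) e^(-gamma s) / Gamma(s+1) *)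
Definition dickman_f01 (s t : R) : R :=
  s * Rpower t (s - 1) * exp (- EulerGamma * s) / GammaR (s + 1).

From Stdlib Require Import Factorial Reals Lra Lia ZArith ClassicalEpsilon.
Open Scope R_scope.

(* Write [s = k / ln N], [t = m / N] and [D(lam) = sum_(n <= N) r(n) (1 - e^(-lam n))].
   By size biasing, [m P(tau_(k+1) = m) = (k+1) E[T; tau_(k+1) = m]]; since [n P(T = n)] is
   [O(1 / ln N)] this gives, for every [lam >= 0], the tilted bound
   [P(tau_(k+1) = m) <= (k+1)/m O(1/ln N) e^(lam m) E[e^(-lam T)]^k]
   with [E[e^(-lam T)] <= exp(-D(lam) / R_N)].  Comparing with harmonic sums, [R_N ~ a ln N]
   and [D(lam) >= (1 - o(1)) a ln(lam N)], so the choice [lam = (1 + s)/m] yields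
   [P(tau_k = m) <= C (s/t)/N exp(O(1 + s) + (1 - eps/2) s ln t - (1 - eps/2) s ln(1 + s))].
   Both stated forms follow from this; the Dickman density enters through
   [Gamma(y) <= y^y] for [y > 1] and [EulerGamma <= 1]. *)

Lemma ln_le (x y : R) : 0 < x -> x <= y -> ln x <= ln y.
Proof. intros hx [h|h]; [left; apply ln_increasing | subst]; lra. Qed.

Lemma exp_le (x y : R) : x <= y -> exp x <= exp y.
Proof. intros [h|h]; [left; apply exp_increasing | subst]; lra. Qed.

Lemma ln_le_sub1 (x : R) : 0 < x -> ln x <= x - 1.
Proof. intros hx. pose proof (exp_ineq1_le (ln x)). rewrite exp_ln in H; lra. Qed.

Lemma ln_ge_1_sub_inv (x : R) : 0 < x -> 1 - / x <= ln x.
Proof.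
  intros hx. pose proof (ln_le_sub1 (/ x) (Rinv_0_lt_compat _ hx)).
  rewrite ln_Rinv in H; lra.
Qed.

Lemma ln_1p_le (x : R) : 0 <= x -> ln (1 + x) <= x.
Proof. intros; pose proof (ln_le_sub1 (1 + x)); lra. Qed.

Lemma ln_1p_nonneg (x : R) : 0 <= x -> 0 <= ln (1 + x).
Proof. intros; rewrite <- ln_1; apply ln_le; lra. Qed.

Lemma ln_div (x y : R) : 0 < x -> 0 < y -> ln (x / y) = ln x - ln y.
Proof. intros. unfold Rdiv. rewrite ln_mult, ln_Rinv; auto. now apply Rinv_0_lt_compat. Qed.

Lemma ln_ge_1 (x : R) : 3 <= x -> 1 <= ln x.
Proof. intros. rewrite <- (ln_exp 1). apply ln_le; [apply exp_pos|]. pose proof exp_le_3; lra. Qed.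

Lemma ln_INR_nonneg (n : nat) : (1 <= n)%nat -> 0 <= ln (INR n).
Proof. intros. rewrite <- ln_1. apply ln_le; [lra|]. now apply (le_INR 1). Qed.

Lemma INR_S_pos (i : nat) : 0 < INR (S i).
Proof. apply lt_0_INR; lia. Qed.

Lemma Rdiv_nonneg (x y : R) : 0 <= x -> 0 < y -> 0 <= x / y.
Proof. intros. apply Rmult_le_pos; auto. left; now apply Rinv_0_lt_compat. Qed.

Lemma Rle_div_of_mul_le (x y z : R) : 0 < z -> x * z <= y -> x <= y / z.
Proof.
  intros hz h. apply Rmult_le_reg_r with z; auto.
  unfold Rdiv. rewrite Rmult_assoc, Rinv_l; lra.
Qed.

Lemma Rdiv_le_of_le_mul (x y z : R) : 0 < z -> y <= x * z -> y / z <= x.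
Proof.
  intros hz h. apply Rmult_le_reg_r with z; auto.
  unfold Rdiv. rewrite Rmult_assoc, Rinv_l; lra.
Qed.

Lemma exp_pow (x : R) (n : nat) : exp x ^ n = exp (INR n * x).
Proof.
  induction n; [simpl; now rewrite Rmult_0_l, exp_0|].
  rewrite S_INR. simpl. rewrite IHn, <- exp_plus. f_equal; ring.
Qed.

Lemma nat_between (x : R) : 0 < x -> exists u : nat, x < INR u <= x + 1.
Proof.
  intros hx. destruct (archimed x) as [h1 h2].
  assert (0 < up x)%Z by (apply lt_IZR; lra).
  exists (Z.to_nat (up x)). rewrite INR_IZR_INZ, Z2Nat.id by lia. lra.
Qed.

Lemma ln_INR_eventually_ge (T : R) :
  exists N0 : nat, forall N, (N0 <= N)%nat -> 3 <= INR N /\ T <= ln (INR N).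
Proof.
  destruct (nat_between (exp T) (exp_pos T)) as [u [hu1 hu2]].
  exists (u + 3)%nat. intros N hN. apply le_INR in hN.
  rewrite plus_INR in hN. simpl in hN. pose proof (pos_INR u). split; [lra|].
  rewrite <- (ln_exp T). apply ln_le; [apply exp_pos | lra].
Qed.

Lemma sumR_S (n : nat) (f : nat -> R) : sumR (S n) f = sumR n f + f n.
Proof. reflexivity. Qed.

Lemma sumR_ext (n : nat) (f g : nat -> R) :
  (forall i, (i < n)%nat -> f i = g i) -> sumR n f = sumR n g.
Proof. induction n; simpl; intros H; auto. rewrite IHn, H; auto. Qed.

Lemma sumR_le (n : nat) (f g : nat -> R) :
  (forall i, (i < n)%nat -> f i <= g i) -> sumR n f <= sumR n g.
Proof.
  induction n; simpl; intros H; [lra|].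
  assert (sumR n f <= sumR n g) by auto. pose proof (H n (Nat.lt_succ_diag_r n)). lra.
Qed.

Lemma sumR_zero (n : nat) (f : nat -> R) :
  (forall i, (i < n)%nat -> f i = 0) -> sumR n f = 0.
Proof. induction n; simpl; intros H; auto. rewrite IHn, H; auto; lra. Qed.

Lemma sumR_nonneg (n : nat) (f : nat -> R) :
  (forall i, (i < n)%nat -> 0 <= f i) -> 0 <= sumR n f.
Proof.
  intros H. rewrite <- (sumR_zero n (fun _ => 0)) by auto. now apply sumR_le.
Qed.

Lemma sumR_plus (n : nat) (f g : nat -> R) :
  sumR n (fun i => f i + g i) = sumR n f + sumR n g.
Proof. induction n; simpl; lra. Qed.

Lemma sumR_minus (n : nat) (f g : nat -> R) :
  sumR n (fun i => f i - g i) = sumR n f - sumR n g.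
Proof. induction n; simpl; lra. Qed.

Lemma sumR_scal (n : nat) (c : R) (f : nat -> R) :
  sumR n (fun i => c * f i) = c * sumR n f.
Proof. induction n; simpl; lra. Qed.

Lemma sumR_shift (n : nat) (f : nat -> R) :
  sumR (S n) f = f 0%nat + sumR n (fun i => f (S i)).
Proof. induction n; simpl in *; [lra|]. rewrite IHn; lra. Qed.

Lemma sumR_ge_term (n j : nat) (f : nat -> R) :
  (forall i, 0 <= f i) -> (j < n)%nat -> f j <= sumR n f.
Proof.
  intros H; induction n; intros hj; [lia|]. rewrite sumR_S.
  destruct (Nat.eq_dec j n) as [->|hne].
  - pose proof (sumR_nonneg n f (fun i _ => H i)). lra.
  - pose proof (IHn ltac:(lia)). pose proof (H n). lra.
Qed.

Lemma sumR_le_of_support (n M : nat) (q : nat -> R) :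
  (forall i, 0 <= q i) -> (forall i, (M <= i)%nat -> q i = 0) -> sumR n q <= sumR M q.
Proof.
  intros H0 H1. destruct (Nat.le_gt_cases n M) as [hnM|hMn].
  - clear H1. induction hnM; [lra|]. simpl. pose proof (H0 m); lra.
  - replace n with (M + (n - M))%nat by lia. induction (n - M)%nat as [|d IH].
    + rewrite Nat.add_0_r; lra.
    + rewrite Nat.add_succ_r; simpl. rewrite (H1 (M + d)%nat); [lra|lia].
Qed.

Lemma sumR_rev (n : nat) (f : nat -> R) :
  sumR n f = sumR n (fun i => f (n - 1 - i)%nat).
Proof.
  revert f; induction n; intros f; auto.
  rewrite (sumR_shift n (fun i => f (S n - 1 - i)%nat)), sumR_S, (IHn f).
  replace (S n - 1 - 0)%nat with n by lia.
  rewrite Rplus_comm. f_equal. apply sumR_ext. intros. f_equal. lia.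
Qed.

Lemma sumR_swap (n : nat) (H : nat -> nat -> R) :
  sumR n (fun j => sumR (S j) (fun i => H i j)) =
  sumR n (fun i => sumR (n - i) (fun a => H i (i + a)%nat)).
Proof.
  induction n; auto.
  rewrite (sumR_S n (fun j => sumR (S j) (fun i => H i j))), IHn.
  rewrite (sumR_ext (S n) (fun i => sumR (S n - i) (fun a => H i (i + a)%nat))
            (fun i => sumR (n - i) (fun a => H i (i + a)%nat) + H i n)).
  - rewrite sumR_plus, (sumR_S n (fun i => sumR (n - i) _)), Nat.sub_diag. simpl. lra.
  - intros i hi. replace (S n - i)%nat with (S (n - i)) by lia. simpl.
    now replace (i + (n - i))%nat with n by lia.
Qed.

(** * The law of [tau] *)

Section Convolution.
Variable r : nat -> R.
Variable N : nat.

Lemma probTau_S k m :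
  probTau r N (S k) m = sumR (S m) (fun j => probTau r N k j * pT r N (m - j)).
Proof. reflexivity. Qed.

Lemma probTau_lt k m : (m < k)%nat -> probTau r N k m = 0.
Proof.
  revert m; induction k; intros m hm; [lia|]. rewrite probTau_S. apply sumR_zero. intros j hj.
  destruct (Nat.lt_ge_cases j k).
  - rewrite IHk; auto; ring.
  - replace (m - j)%nat with 0%nat by lia. unfold pT; simpl. ring.
Qed.

Lemma probTau_size_bias k m :
  INR m * probTau r N (S k) m =
  INR (S k) * sumR (S m) (fun j => probTau r N k j * (INR (m - j) * pT r N (m - j))).
Proof.
  set (P := probTau r N). set (p := pT r N). set (w := fun i => INR i * p i).
  change (INR m * P (S k) m = INR (S k) * sumR (S m) (fun j => P k j * w (m - j)%nat)).
  revert m; induction k; intros m.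
  - unfold P at 1; rewrite probTau_S. fold P p. rewrite !sumR_shift. simpl (P 0%nat 0%nat).
    rewrite !(sumR_zero m); [|intros; unfold P; simpl; ring ..].
    unfold w. rewrite Nat.sub_0_r. simpl. lra.
  - unfold P at 1; rewrite probTau_S. fold P p.
    assert (split_m : INR m * sumR (S m) (fun j => P (S k) j * p (m - j)%nat) =
      sumR (S m) (fun j => (INR j * P (S k) j) * p (m - j)%nat) +
      sumR (S m) (fun j => P (S k) j * w (m - j)%nat)).
    { rewrite <- sumR_scal, <- sumR_plus. apply sumR_ext. intros j hj.
      unfold w. rewrite minus_INR by lia. ring. }
    rewrite split_m, (sumR_ext _ (fun j => (INR j * P (S k) j) * p (m - j)%nat)
      (fun j => INR (S k) * sumR (S j) (fun i => P k i * w (j - i)%nat * p (m - j)%nat))).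
    2:{ intros j hj. rewrite IHk, Rmult_assoc. f_equal.
        rewrite Rmult_comm, <- sumR_scal. apply sumR_ext; intros; ring. }
    rewrite sumR_scal.
    assert (reorder : sumR (S m) (fun j => sumR (S j)
                                   (fun i => P k i * w (j - i)%nat * p (m - j)%nat))
       = sumR (S m) (fun j => P (S k) j * w (m - j)%nat)).
    { rewrite (sumR_ext (S m) (fun j => P (S k) j * w (m - j)%nat)
         (fun j => sumR (S j) (fun i => P k i * p (j - i)%nat * w (m - j)%nat))).
      2:{ intros j hj. unfold P at 1; rewrite probTau_S. fold P p.
          rewrite Rmult_comm, <- sumR_scal. apply sumR_ext; intros; ring. }
      rewrite !sumR_swap. apply sumR_ext. intros i hi.
      replace (S m - i)%nat with (S (m - i)) by lia.
      rewrite sumR_rev. apply sumR_ext. intros a ha.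
      replace (i + (S (m - i) - 1 - a) - i)%nat with (m - i - a)%nat by lia.
      replace (m - (i + (S (m - i) - 1 - a)))%nat with a by lia.
      replace (m - (i + a))%nat with (m - i - a)%nat by lia.
      replace (i + a - i)%nat with a by lia. ring. }
    rewrite reorder, (S_INR (S k)). ring.
Qed.

Hypothesis hrpos : forall n : nat, (1 <= n)%nat -> 0 < r n.

Definition laplace (lam : R) : R := sumR (S N) (fun n => pT r N n * exp (- lam * INR n)).

Definition defect (lam : R) : R :=
  sumR N (fun i => r (S i) * (1 - exp (- lam * INR (S i)))).

Lemma defect_nonneg lam : 0 <= lam -> 0 <= defect lam.
Proof.
  intros hl. apply sumR_nonneg. intros i _.
  apply Rmult_le_pos; [left; apply hrpos; lia|].
  assert (exp (- lam * INR (S i)) <= 1).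
  { rewrite <- exp_0. apply exp_le. pose proof (INR_S_pos i). nra. }
  lra.
Qed.

Hypothesis hN : (1 <= N)%nat.

Lemma RN_pos : 0 < RN r N.
Proof.
  destruct N as [|N']; [lia|]. unfold RN. rewrite sumR_S.
  assert (0 <= sumR N' (fun i => r (S i))) by (apply sumR_nonneg; intros; left; apply hrpos; lia).
  assert (0 < r (S N')) by (apply hrpos; lia). lra.
Qed.

Lemma pT_nonneg n : 0 <= pT r N n.
Proof.
  unfold pT. destruct (Nat.leb 1 n) eqn:E1; destruct (Nat.leb n N); simpl; try lra.
  apply Nat.leb_le in E1. apply Rdiv_nonneg; [left; auto | apply RN_pos].
Qed.

Lemma pT_gt n : (N < n)%nat -> pT r N n = 0.
Proof.
  intros h. unfold pT. rewrite (proj2 (Nat.leb_gt n N) h). now destruct (Nat.leb 1 n).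
Qed.

Lemma probTau_nonneg k m : 0 <= probTau r N k m.
Proof.
  revert m; induction k; intros m; [simpl; destruct (Nat.eqb m 0); lra|].
  rewrite probTau_S. apply sumR_nonneg. intros. apply Rmult_le_pos; auto. apply pT_nonneg.
Qed.

Lemma npT_le A : 0 <= A -> (forall n, (1 <= n)%nat -> INR n * r n <= A) ->
  forall n, INR n * pT r N n <= A / RN r N.
Proof.
  intros hA hnr n. pose proof RN_pos. unfold pT.
  destruct (Nat.leb 1 n) eqn:E1; destruct (Nat.leb n N); simpl;
    try (rewrite Rmult_0_r; now apply Rdiv_nonneg).
  apply Nat.leb_le in E1. unfold Rdiv. rewrite <- Rmult_assoc.
  apply Rmult_le_compat_r; [left; now apply Rinv_0_lt_compat | auto].
Qed.

Lemma laplace_nonneg lam : 0 <= laplace lam.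
Proof.
  apply sumR_nonneg; intros; apply Rmult_le_pos; [apply pT_nonneg | left; apply exp_pos].
Qed.

Lemma laplace_probTau_le lam k M :
  sumR (S M) (fun j => probTau r N k j * exp (- lam * INR j)) <= laplace lam ^ k.
Proof.
  revert M; induction k; intros M.
  - rewrite sumR_shift, sumR_zero by (intros; simpl; lra). simpl.
    rewrite Rmult_0_r, exp_0. lra.
  - rewrite (sumR_ext _ _ (fun j => sumR (S j)
                (fun i => probTau r N k i * pT r N (j - i) * exp (- lam * INR j)))).
    2:{ intros j hj. rewrite probTau_S, Rmult_comm, <- sumR_scal. apply sumR_ext; intros; ring. }
    rewrite sumR_swap.
    apply Rle_trans with
      (sumR (S M) (fun i => laplace lam * (probTau r N k i * exp (- lam * INR i)))).
    + apply sumR_le. intros i hi.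
      rewrite (sumR_ext _ _ (fun a => (probTau r N k i * exp (- lam * INR i))
                                      * (pT r N a * exp (- lam * INR a)))).
      2:{ intros a ha. replace (i + a - i)%nat with a by lia. rewrite plus_INR.
          replace (- lam * (INR i + INR a)) with (- lam * INR i + - lam * INR a) by ring.
          rewrite exp_plus. ring. }
      rewrite sumR_scal, (Rmult_comm (laplace lam)). apply Rmult_le_compat_l.
      * apply Rmult_le_pos; [apply probTau_nonneg | left; apply exp_pos].
      * apply sumR_le_of_support.
        -- intros; apply Rmult_le_pos; [apply pT_nonneg | left; apply exp_pos].
        -- intros a ha. rewrite pT_gt by lia. ring.
    + rewrite sumR_scal. simpl. apply Rmult_le_compat_l; [apply laplace_nonneg | apply IHk].
Qed.

Lemma laplace_le_exp_defect lam : laplace lam <= exp (- defect lam / RN r N).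
Proof.
  pose proof RN_pos as hR.
  assert (laplace lam = 1 + - defect lam / RN r N) as ->; [|apply exp_ineq1_le].
  unfold laplace, defect. rewrite sumR_shift. unfold pT at 1; simpl. rewrite Rmult_0_l, Rplus_0_l.
  rewrite (sumR_ext _ _ (fun i => / RN r N * (r (S i) * exp (- lam * INR (S i))))).
  2:{ intros i hi. unfold pT. rewrite (proj2 (Nat.leb_le (S i) N)) by lia. simpl.
      unfold Rdiv. ring. }
  rewrite sumR_scal, (sumR_ext _ (fun i => r (S i) * (1 - exp (- lam * INR (S i))))
    (fun i => r (S i) - r (S i) * exp (- lam * INR (S i)))) by (intros; ring).
  rewrite sumR_minus. fold (RN r N). field. lra.
Qed.

Lemma probTau_local_bound k m lam A : (1 <= m)%nat -> 0 <= lam ->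
  (forall n, INR n * pT r N n <= A) ->
  probTau r N (S k) m <= INR (S k) / INR m * A * exp (lam * INR m) * laplace lam ^ k.
Proof.
  intros hm hl hw. assert (hmpos : 0 < INR m) by (apply lt_0_INR; lia).
  assert (hA : 0 <= A) by (pose proof (hw 0%nat); simpl in H; lra).
  assert (INR m * probTau r N (S k) m <=
          INR (S k) * (A * (exp (lam * INR m) * laplace lam ^ k))).
  { rewrite probTau_size_bias. apply Rmult_le_compat_l; [apply pos_INR|].
    apply Rle_trans with (sumR (S m)
      (fun j => A * (exp (lam * INR m) * (probTau r N k j * exp (- lam * INR j))))).
    - apply sumR_le. intros j hj.
      assert (1 <= exp (lam * INR m) * exp (- lam * INR j)).
      { rewrite <- exp_plus, <- exp_0. apply exp_le.
        assert (INR j <= INR m) by (apply le_INR; lia). nra. }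
      pose proof (hw (m - j)%nat). pose proof (probTau_nonneg k j).
      assert (0 <= INR (m - j) * pT r N (m - j))
        by (apply Rmult_le_pos; [apply pos_INR | apply pT_nonneg]).
      set (w := INR (m - j) * pT r N (m - j)) in *.
      set (e1 := exp (lam * INR m)) in *. set (e2 := exp (- lam * INR j)) in *.
      replace (A * (e1 * (probTau r N k j * e2))) with (probTau r N k j * (A * (e1 * e2))) by ring.
      apply Rmult_le_compat_l; auto. nra.
    - rewrite !sumR_scal. apply Rmult_le_compat_l; auto.
      apply Rmult_le_compat_l; [left; apply exp_pos | apply laplace_probTau_le]. }
  apply Rmult_le_reg_l with (INR m); auto. eapply Rle_trans; [apply H|]. right; field; lra.
Qed.

Lemma probTau_le_exp_defect k m lam A : (1 <= m)%nat -> 0 <= lam ->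
  (forall n, INR n * pT r N n <= A) ->
  probTau r N (S k) m <=
    INR (S k) / INR m * A * exp (lam * INR m - INR k * (defect lam / RN r N)).
Proof.
  intros hm hl hw. eapply Rle_trans; [apply probTau_local_bound; eauto|].
  assert (hA : 0 <= A) by (pose proof (hw 0%nat); simpl in H; lra).
  unfold Rminus. rewrite exp_plus, <- Rmult_assoc.
  apply Rmult_le_compat_l.
  - apply Rmult_le_pos; [apply Rmult_le_pos; auto | left; apply exp_pos].
    apply Rdiv_nonneg; [apply pos_INR | apply lt_0_INR; lia].
  - replace (- (INR k * (defect lam / RN r N))) with (INR k * (- defect lam / RN r N))
      by (unfold Rdiv; ring).
    rewrite <- exp_pow. apply pow_incr. split; [apply laplace_nonneg | apply laplace_le_exp_defect].
Qed.

End Convolution.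

(** * Harmonic sums and the asymptotics of [R_N] *)

Lemma harmonic_tail_ge (n1 : nat) : (1 <= n1)%nat -> forall N,
  ln (INR N + 1) - ln (INR n1) <=
  sumR N (fun i => if Nat.leb n1 (S i) then / INR (S i) else 0).
Proof.
  intros h1 N. assert (hn1 : 1 <= INR n1) by now apply (le_INR 1).
  induction N.
  - simpl. rewrite Rplus_0_l, ln_1. pose proof (ln_INR_nonneg n1 h1). lra.
  - rewrite sumR_S, S_INR. pose proof (pos_INR N). destruct (Nat.leb n1 (S N)) eqn:E.
    + assert (ln (INR N + 1 + 1) - ln (INR N + 1) <= / (INR N + 1)).
      { rewrite <- ln_div by lra. eapply Rle_trans; [apply ln_le_sub1, Rdiv_lt_0_compat; lra|].
        right; field; lra. }
      lra.
    + apply Nat.leb_gt in E.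
      assert (0 <= sumR N (fun i => if Nat.leb n1 (S i) then / INR (S i) else 0)).
      { apply sumR_nonneg. intros. destruct (Nat.leb n1 (S i)); [|lra].
        left; apply Rinv_0_lt_compat, INR_S_pos. }
      assert (ln (INR N + 1 + 1) <= ln (INR n1)).
      { apply ln_le; [lra|]. rewrite <- !S_INR. apply le_INR; lia. }
      lra.
Qed.

Lemma ln_S_sub_ge_inv (n : nat) : / INR (S (S n)) <= ln (INR (S (S n))) - ln (INR (S n)).
Proof.
  pose proof (INR_S_pos n). pose proof (INR_S_pos (S n)).
  rewrite <- ln_div by lra. eapply Rle_trans; [|apply ln_ge_1_sub_inv, Rdiv_lt_0_compat; lra].
  right. rewrite (S_INR (S n)). field. rewrite <- S_INR; lra.
Qed.

Lemma harmonic_le (N : nat) : (1 <= N)%nat -> sumR N (fun i => / INR (S i)) <= 1 + ln (INR N).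
Proof.
  induction N; intros h; [lia|]. destruct N; [simpl; rewrite ln_1; lra|].
  rewrite sumR_S. pose proof (ln_S_sub_ge_inv N). pose proof (IHN ltac:(lia)). lra.
Qed.

Lemma geometric_tail_le (lam : R) : 0 < lam -> forall N,
  sumR N (fun i => lam * exp (- lam * INR (S i))) <= 1 - exp (- lam * INR N).
Proof.
  intros hl N. induction N; [simpl; rewrite Rmult_0_r, exp_0; lra|].
  rewrite sumR_S.
  assert (lam * exp (- lam * INR (S N)) <= exp (- lam * INR N) - exp (- lam * INR (S N))).
  { rewrite S_INR. replace (- lam * (INR N + 1)) with (- lam * INR N + - lam) by ring.
    rewrite exp_plus. pose proof (exp_pos (- lam * INR N)).
    assert ((1 + lam) * exp (- lam) <= 1).
    { assert (exp lam * exp (- lam) = 1) by (rewrite <- exp_plus, Rplus_opp_r; apply exp_0).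
      pose proof (exp_ineq1_le lam). pose proof (exp_pos (- lam)). nra. }
    replace (exp (- lam * INR N) - exp (- lam * INR N) * exp (- lam))
      with (exp (- lam * INR N) * (1 - exp (- lam))) by ring.
    replace (lam * (exp (- lam * INR N) * exp (- lam)))
      with (exp (- lam * INR N) * (lam * exp (- lam))) by ring.
    apply Rmult_le_compat_l; lra. }
  lra.
Qed.

Section Asymptotics.
Variable r : nat -> R.
Hypothesis hrpos : forall n : nat, (1 <= n)%nat -> 0 < r n.

Lemma le_r_of_le_mul (n : nat) (rho : R) :
  (1 <= n)%nat -> rho <= INR n * r n -> rho * / INR n <= r n.
Proof.
  intros hn h. assert (0 < INR n) by (apply lt_0_INR; lia).
  apply Rmult_le_reg_l with (INR n); auto.
  rewrite <- Rmult_assoc, (Rmult_comm _ rho), Rmult_assoc, Rinv_r; lra.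
Qed.

Lemma RN_ge N n0 rho :
  (1 <= n0)%nat -> 0 <= rho -> (forall n, (n0 <= n)%nat -> rho <= INR n * r n) ->
  rho * (ln (INR N + 1) - ln (INR n0)) <= RN r N.
Proof.
  intros h0 hrho hr. eapply Rle_trans; [apply Rmult_le_compat_l, harmonic_tail_ge; auto|].
  unfold RN. rewrite <- sumR_scal. apply sumR_le. intros i hi.
  destruct (Nat.leb n0 (S i)) eqn:E.
  - apply le_r_of_le_mul; [lia|]. apply hr. now apply Nat.leb_le.
  - rewrite Rmult_0_r. left; apply hrpos; lia.
Qed.

Lemma RN_le N n0 rho :
  (1 <= N)%nat -> (forall n, (n0 <= n)%nat -> INR n * r n <= rho) -> 0 <= rho ->
  RN r N <= sumR n0 (fun i => r (S i)) + rho * (1 + ln (INR N)).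
Proof.
  intros hN hr hrho. set (head := fun i => if Nat.ltb (S i) n0 then r (S i) else 0).
  assert (hhead : forall i, 0 <= head i).
  { intros i; unfold head. destruct (Nat.ltb (S i) n0); [left; apply hrpos; lia | lra]. }
  apply Rle_trans with (sumR N head + rho * sumR N (fun i => / INR (S i))).
  - unfold RN. rewrite <- sumR_scal, <- sumR_plus. apply sumR_le. intros i hi.
    pose proof (INR_S_pos i). unfold head. destruct (Nat.ltb (S i) n0) eqn:E.
    + assert (0 <= rho * / INR (S i)) by (apply Rdiv_nonneg; auto). lra.
    + apply Nat.ltb_ge in E. specialize (hr _ E).
      assert (r (S i) <= rho * / INR (S i)).
      { apply Rmult_le_reg_l with (INR (S i)); auto.
        rewrite <- Rmult_assoc, (Rmult_comm _ rho), Rmult_assoc, Rinv_r; lra. }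
      lra.
  - apply Rplus_le_compat.
    + eapply Rle_trans; [apply (sumR_le_of_support N n0 head hhead)|].
      * intros i hi. unfold head. now rewrite (proj2 (Nat.ltb_ge (S i) n0)) by lia.
      * apply sumR_le. intros i hi. unfold head. destruct (Nat.ltb (S i) n0); [lra|].
        left; apply hrpos; lia.
    + apply Rmult_le_compat_l; auto. now apply harmonic_le.
Qed.

Lemma defect_ge N n1 n0 lam rho :
  (1 <= n1)%nat -> (n0 <= n1)%nat -> 0 < lam -> 1 <= lam * INR n1 -> 0 <= rho ->
  (forall n, (n0 <= n)%nat -> rho <= INR n * r n) ->
  rho * (ln (INR N + 1) - ln (INR n1) - 1) <= defect r N lam.
Proof.
  intros h1 h01 hl hl1 hrho hr.
  apply Rle_trans with (rho * (sumR N (fun i => if Nat.leb n1 (S i) then / INR (S i) else 0)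
                               - sumR N (fun i => lam * exp (- lam * INR (S i))))).
  { apply Rmult_le_compat_l; auto. pose proof (harmonic_tail_ge n1 h1 N).
    pose proof (geometric_tail_le lam hl N). pose proof (exp_pos (- lam * INR N)). lra. }
  rewrite <- sumR_minus, <- sumR_scal. apply sumR_le. intros i hi.
  pose proof (INR_S_pos i). set (x := exp (- lam * INR (S i))).
  assert (hx : 0 < x <= 1).
  { split; [apply exp_pos|]. rewrite <- exp_0. apply exp_le. nra. }
  assert (0 < r (S i)) by (apply hrpos; lia).
  destruct (Nat.leb n1 (S i)) eqn:E.
  - apply Nat.leb_le in E.
    assert (/ INR (S i) <= lam).
    { apply le_INR in E. apply Rmult_le_reg_l with (INR (S i)); auto. rewrite Rinv_r; nra. }
    assert (rho * / INR (S i) <= r (S i)) by (apply le_r_of_le_mul, hr; lia).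
    assert (0 <= rho * / INR (S i)) by (apply Rdiv_nonneg; auto).
    assert (rho * (/ INR (S i) * x) <= rho * (lam * x)) by (apply Rmult_le_compat_l; nra).
    nra.
  - assert (0 <= rho * (lam * x)) by (apply Rmult_le_pos; nra). nra.
Qed.

Lemma defect_ge_log N n0 lam rho :
  (1 <= n0)%nat -> 0 < lam -> 0 <= rho -> (forall n, (n0 <= n)%nat -> rho <= INR n * r n) ->
  rho * (ln (INR N + 1) - Rmax (ln (INR n0)) (- ln lam) - 2) <= defect r N lam.
Proof.
  intros h0 hl hrho hr. assert (hn0 : 1 <= INR n0) by now apply (le_INR 1).
  destruct (nat_between (/ lam)) as [u [hu1 hu2]]; [now apply Rinv_0_lt_compat|].
  set (n1 := Nat.max n0 u).
  assert (hu : lam * INR u > 1).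
  { apply Rmult_lt_compat_l with (r := lam) in hu1; auto. rewrite Rinv_r in hu1; lra. }
  assert (hlog : ln (INR n1) <= Rmax (ln (INR n0)) (- ln lam) + 1).
  { destruct (Rle_lt_dec (INR n0) (/ lam)) as [hfar|hnear].
    - assert (INR n1 <= 2 * / lam).
      { unfold n1. destruct (Nat.max_spec n0 u) as [[_ ->]|[_ ->]]; lra. }
      apply Rle_trans with (ln (2 * / lam)).
      + apply ln_le; [apply lt_0_INR; lia | auto].
      + rewrite ln_mult, ln_Rinv by (try apply Rinv_0_lt_compat; lra).
        pose proof (ln_le_sub1 2). pose proof (Rmax_r (ln (INR n0)) (- ln lam)). lra.
    - assert ((u <= n0)%nat).
      { assert (INR u < INR (S n0)) by (rewrite S_INR; lra). apply INR_lt in H. lia. }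
      unfold n1. rewrite Nat.max_l by lia. pose proof (Rmax_l (ln (INR n0)) (- ln lam)). lra. }
  eapply Rle_trans; [|apply (defect_ge N n1 n0 lam rho); auto; try lia].
  - apply Rmult_le_compat_l; lra.
  - apply Rle_trans with (lam * INR u); [lra|]. apply Rmult_le_compat_l; [lra|]. apply le_INR; lia.
Qed.

Section Limit.
Variable a : R.
Hypothesis ha : 0 < a.
Hypothesis hrasym : Un_cv (fun n => INR n * r n) a.

Lemma nr_near_a (eta : R) : 0 < eta -> exists n0 : nat, (1 <= n0)%nat /\
  forall n, (n0 <= n)%nat -> (1 - eta) * a <= INR n * r n <= (1 + eta) * a.
Proof.
  intros he. destruct (hrasym (eta * a)) as [M HM]; [nra|].
  exists (S M). split; [lia|]. intros n hn. specialize (HM n ltac:(lia)).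
  unfold R_dist in HM. apply Rabs_def2 in HM. lra.
Qed.

Lemma nr_bounded : exists A0, 0 < A0 /\ forall n, (1 <= n)%nat -> INR n * r n <= A0.
Proof.
  destruct (nr_near_a 1 Rlt_0_1) as [n0 [h0 H0]].
  set (S1 := sumR n0 (fun i => INR (S i) * r (S i))).
  assert (hpos : forall i, 0 <= INR (S i) * r (S i)).
  { intros; apply Rmult_le_pos; [apply pos_INR | left; apply hrpos; lia]. }
  exists (2 * a + S1). assert (0 <= S1) by (apply sumR_nonneg; auto).
  split; [lra|]. intros n hn. destruct (Nat.le_gt_cases n0 n) as [h|h].
  - specialize (H0 n h). lra.
  - destruct n as [|n]; [lia|].
    pose proof (sumR_ge_term n0 n (fun i => INR (S i) * r (S i)) hpos ltac:(lia)).
    fold S1 in H1. lra.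
Qed.

Lemma RN_asymptotic (eta : R) : 0 < eta < 1 -> exists N0 : nat, forall N, (N0 <= N)%nat ->
  (1 - eta) * a * ln (INR N) <= RN r N <= (1 + eta) * a * ln (INR N).
Proof.
  intros he. destruct (nr_near_a (eta / 2)) as [n0 [h0 H0]]; [lra|].
  set (S0 := sumR n0 (fun i => r (S i))).
  assert (hS0 : 0 <= S0) by (apply sumR_nonneg; intros; left; apply hrpos; lia).
  pose proof (ln_INR_nonneg n0 h0) as hl0.
  destruct (ln_INR_eventually_ge (2 / eta * ln (INR n0) + 2 / (eta * a) * (S0 + (1 + eta / 2) * a)))
    as [N0 HN0].
  exists N0. intros N hN. destruct (HN0 N hN) as [hN3 hL]. set (L := ln (INR N)) in *.
  assert (hT1 : 0 <= 2 / eta * ln (INR n0)) by (apply Rmult_le_pos; [apply Rdiv_nonneg|]; lra).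
  assert (hT2 : 0 <= 2 / (eta * a) * (S0 + (1 + eta / 2) * a)).
  { apply Rmult_le_pos; [apply Rdiv_nonneg|]; nra. }
  split.
  - eapply Rle_trans;
      [|apply (RN_ge N n0 ((1 - eta / 2) * a)); [exact h0 | nra | intros n hn; apply H0, hn]].
    assert (L <= ln (INR N + 1)) by (apply ln_le; lra).
    assert (ln (INR n0) <= eta / 2 * L).
    { apply Rmult_le_reg_l with (2 / eta); [apply Rdiv_lt_0_compat; lra|].
      replace (2 / eta * (eta / 2 * L)) with L by (field; lra). lra. }
    assert (hX : (1 - eta / 2) * a * ((1 - eta / 2) * L)
                 <= (1 - eta / 2) * a * (ln (INR N + 1) - ln (INR n0)))
      by (apply Rmult_le_compat_l; nra).
    assert (0 <= a * L) by nra. nra.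
  - eapply Rle_trans;
      [apply (RN_le N n0 ((1 + eta / 2) * a));
         [apply INR_le; simpl; lra | intros n hn; apply H0, hn | nra]|].
    assert (S0 + (1 + eta / 2) * a <= eta / 2 * a * L).
    { apply Rmult_le_reg_l with (2 / (eta * a)); [apply Rdiv_lt_0_compat; nra|].
      replace (2 / (eta * a) * (eta / 2 * a * L)) with L by (field; lra). lra. }
    fold S0 L. nra.
Qed.

End Limit.
End Asymptotics.

Lemma exponent_bound_far (s L lt l1 e th Q : R) :
  0 < s -> 1 <= L -> -L <= lt <= 0 -> 0 <= l1 <= 2 * L ->
  0 < e <= 1/2 -> 1 - e / 2 <= th <= 1 -> 0 <= Q ->
  (2 <= l1 - lt -> th * (s - 1 / L) * (l1 - lt - 2) <= Q) ->
  1 + s - Q <= (1 - e / 2) * s * lt + 4 + 3 * s - (1 - e / 2) * s * l1.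
Proof.
  intros hs hL hlt hl1 he hth hQ HQ. set (X := l1 - lt) in *.
  assert (Hmain : th * s * X - 2 * s - 3 <= Q).
  { destruct (Rle_lt_dec 2 X) as [hX|hX].
    - specialize (HQ hX).
      assert (th * (X - 2) / L <= 3).
      { apply Rdiv_le_of_le_mul; [lra|]. assert (th * (X - 2) <= X - 2) by nra.
        unfold X in *; nra. }
      assert (th * (s - 1 / L) * (X - 2) = th * s * X - 2 * th * s - th * (X - 2) / L)
        by (field; lra).
      nra.
    - assert (th * s * X <= th * s * 2) by (apply Rmult_le_compat_l; nra). nra. }
  assert (0 <= (th - (1 - e / 2)) * s * X) by (apply Rmult_le_pos; [nra | unfold X; lra]).
  unfold X in *. nra.
Qed.

Lemma exponent_bound_near (s L lt l1 e th Q ln0 : R) :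
  0 < s < 1 -> 1 <= L -> -L <= lt <= 0 -> 0 <= l1 <= s ->
  0 < e <= 1/2 -> 1 - 3 * e / 8 <= th <= 1 -> 0 <= ln0 -> ln0 + 2 <= e / 8 * L ->
  th * (s - 1 / L) * (L - ln0 - 2) <= Q ->
  1 + s - Q <= (1 - e / 2) * s * lt + 4 + 3 * s - (1 - e / 2) * s * l1.
Proof.
  intros hs hL hlt hl1 he hth hn0 hN HQ.
  assert (th * (L - ln0 - 2) / L <= 1).
  { apply Rdiv_le_of_le_mul; [lra|]. nra. }
  assert (th * (s - 1 / L) * (L - ln0 - 2)
          = th * s * L - th * s * (ln0 + 2) - th * (L - ln0 - 2) / L)
    by (field; lra).
  assert (th * s * (ln0 + 2) <= s * (e / 8 * L)).
  { apply Rle_trans with (s * (ln0 + 2)); [|apply Rmult_le_compat_l; lra].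
    assert (0 <= s * (ln0 + 2)) by (apply Rmult_le_pos; lra). nra. }
  assert (0 <= (th - 1 + 3 * e / 8) * s * L) by (apply Rmult_le_pos; [apply Rmult_le_pos|]; lra).
  assert (s * l1 <= s * 1) by (apply Rmult_le_compat_l; lra).
  assert (0 <= s * l1) by (apply Rmult_le_pos; lra).
  assert ((1 - e / 2) * s * l1 <= s) by nra.
  assert (0 <= (1 - e / 2) * s * (lt + L)) by (apply Rmult_le_pos; [apply Rmult_le_pos|]; lra).
  nra.
Qed.

(* [L + lt - l1] is [-ln lam] for the tilt [lam = (1 + s) / m] used below. *)
Lemma exponent_bound (s L lt l1 e th Q ln0 : R) :
  0 < s -> 1 <= L -> -L <= lt <= 0 -> 0 <= l1 <= s -> l1 <= 2 * L ->
  0 < e <= 1/2 -> 1 - 3 * e / 8 <= th <= 1 -> 0 <= ln0 -> ln0 + 2 <= e / 8 * L -> 0 <= Q ->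
  (L + lt - l1 < ln0 -> s < 1) ->
  (forall Y, 0 <= Y -> Y <= L - Rmax ln0 (L + lt - l1) - 2 -> th * (s - 1 / L) * Y <= Q) ->
  1 + s - Q <= (1 - e / 2) * s * lt + 4 + 3 * s - (1 - e / 2) * s * l1.
Proof.
  intros hs hL hlt hl1 hl1L he hth hn0 hN hQ hnear HQ.
  destruct (Rle_lt_dec ln0 (L + lt - l1)) as [hfar|hclose].
  - apply (exponent_bound_far s L lt l1 e th Q); auto; try lra.
    intros hX. apply HQ; [lra|]. rewrite Rmax_right by lra. lra.
  - assert (e / 8 * L <= L) by nra.
    apply (exponent_bound_near s L lt l1 e th Q ln0); auto; try lra.
    apply HQ; [lra|]. rewrite Rmax_left by lra. lra.
Qed.

Lemma scaled_params_pos N k m : (3 <= N)%nat -> (1 <= k)%nat -> (1 <= m <= N)%nat ->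
  0 < INR k / ln (INR N) /\ 0 < INR m / INR N <= 1.
Proof.
  intros hN hk hm. apply le_INR in hN. simpl in hN.
  assert (1 <= ln (INR N)) by (apply ln_ge_1; lra).
  assert (1 <= INR m <= INR N) by (split; [apply (le_INR 1) | apply le_INR]; lia).
  split; [apply Rdiv_lt_0_compat; [apply lt_0_INR; lia | lra]|].
  split; [apply Rdiv_lt_0_compat; lra | apply Rdiv_le_of_le_mul; lra].
Qed.

Lemma lt_1_of_ln_lt (s L x n0 : R) : 0 < s -> 1 <= n0 -> 2 * n0 <= L -> s * L <= x ->
  ln x - ln (1 + s) < ln n0 -> s < 1.
Proof.
  intros hs hn0 hL hx hlog. assert (0 < x) by nra.
  assert (x / (1 + s) < n0).
  { apply Rnot_le_lt. intros h. apply ln_le in h; [|lra].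
    rewrite ln_div in h by lra. lra. }
  replace x with (x / (1 + s) * (1 + s)) in hx by (field; lra). nra.
Qed.

Definition core_exponent (e s t : R) : R :=
  (1 - e / 2) * s * ln t + 4 + 3 * s - (1 - e / 2) * s * ln (1 + s).

Section Core.
Variable r : nat -> R.
Variable a : R.
Hypothesis ha : 0 < a.
Hypothesis hrpos : forall n : nat, (1 <= n)%nat -> 0 < r n.
Hypothesis hrasym : Un_cv (fun n => INR n * r n) a.

Lemma scaled_defect_ge N k n0 e lam Y :
  (1 <= n0)%nat -> (1 <= N)%nat -> 0 < e <= 1/2 -> 1 <= ln (INR N) -> 0 < lam ->
  (forall n, (n0 <= n)%nat -> (1 - e / 8) * a <= INR n * r n) ->
  RN r N <= (1 + e / 4) * a * ln (INR N) ->
  0 <= Y -> Y <= ln (INR N) - Rmax (ln (INR n0)) (- ln lam) - 2 ->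
  (1 - e / 8) / (1 + e / 4) * (INR (S k) / ln (INR N) - 1 / ln (INR N)) * Y
    <= INR k * (defect r N lam / RN r N).
Proof.
  intros h0 hN he hL hlam Hr hRup hY hYle. set (L := ln (INR N)) in *.
  pose proof (RN_pos r N hrpos hN) as hRpos. apply (le_INR 1) in hN. simpl in hN.
  assert (hD : (1 - e / 8) * a * Y <= defect r N lam).
  { eapply Rle_trans; [|apply (defect_ge_log r hrpos N n0); auto; nra].
    apply Rmult_le_compat_l; [nra|]. assert (L <= ln (INR N + 1)) by (apply ln_le; lra). lra. }
  apply Rle_trans with (INR k * ((1 - e / 8) * a * Y / ((1 + e / 4) * a * L))).
  - right. rewrite S_INR. field. repeat split; nra.
  - apply Rmult_le_compat_l; [apply pos_INR|]. unfold Rdiv.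
    apply Rmult_le_compat; auto.
    + apply Rmult_le_pos; nra.
    + left; apply Rinv_0_lt_compat; nra.
    + apply Rinv_le_contravar; auto.
Qed.

Lemma defect_exponent_le N k m n0 e :
  (1 <= n0)%nat -> (S k <= m <= N)%nat -> 0 < e <= 1/2 -> 1 <= ln (INR N) ->
  (forall n, (n0 <= n)%nat -> (1 - e / 8) * a <= INR n * r n) ->
  RN r N <= (1 + e / 4) * a * ln (INR N) ->
  ln (INR n0) + 2 <= e / 8 * ln (INR N) -> 2 * INR n0 <= ln (INR N) ->
  let s := INR (S k) / ln (INR N) in
  1 + s - INR k * (defect r N ((1 + s) / INR m) / RN r N)
    <= core_exponent e s (INR m / INR N).
Proof.
  intros h0 [hkm hmN] he hL Hr hRup hn0L hn0L' s. set (L := ln (INR N)) in *.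
  assert (hRpos : 0 < RN r N) by (apply RN_pos; auto; lia).
  assert (hm : 1 <= INR m) by (apply (le_INR 1); lia).
  apply le_INR in hkm, hmN.
  assert (hNm : 2 <= INR N) by (pose proof (ln_le_sub1 (INR N) ltac:(lra)); fold L in H; lra).
  assert (hs : 0 < s) by (apply Rdiv_lt_0_compat; [apply INR_S_pos | lra]).
  assert (hsL : s * L = INR (S k)) by (unfold s; field; lra).
  assert (hsN : s <= INR N).
  { apply Rdiv_le_of_le_mul; [lra|]. apply Rle_trans with (INR m); [lra|].
    rewrite <- (Rmult_1_r (INR m)) at 1. apply Rmult_le_compat; lra. }
  assert (hlt : ln (INR m / INR N) = ln (INR m) - L) by (apply ln_div; lra).
  assert (hlm : 0 <= ln (INR m) <= L) by (split; [rewrite <- ln_1|]; apply ln_le; lra).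
  assert (hl1 : 0 <= ln (1 + s) <= s) by (split; [apply ln_1p_nonneg | apply ln_1p_le]; lra).
  assert (hl1L : ln (1 + s) <= 2 * L).
  { replace (2 * L) with (ln (INR N * INR N)) by (rewrite ln_mult; unfold L; lra).
    apply ln_le; nra. }
  assert (hmu : 0 < 1 + s) by lra.
  assert (hlam : - ln ((1 + s) / INR m) = L + ln (INR m / INR N) - ln (1 + s))
    by (rewrite ln_div, hlt by lra; ring).
  set (th := (1 - e / 8) / (1 + e / 4)).
  assert (hth : 1 - 3 * e / 8 <= th <= 1)
    by (split; [apply Rle_div_of_mul_le | apply Rdiv_le_of_le_mul]; nra).
  unfold core_exponent. rewrite hlt in *.
  apply (exponent_bound s L (ln (INR m) - L) (ln (1 + s)) e th _ (ln (INR n0)));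
    try lra; auto using ln_INR_nonneg.
  - apply Rmult_le_pos; [apply pos_INR | apply Rdiv_nonneg; auto].
    apply defect_nonneg; auto. left; apply Rdiv_lt_0_compat; lra.
  - intros hnear. apply (lt_1_of_ln_lt s L (INR m) (INR n0)); try lra.
    now apply (le_INR 1).
  - intros Y hY hYle. rewrite <- hlam in hYle.
    apply (scaled_defect_ge N k n0 e); auto.
    + apply INR_le; simpl; lra.
    + apply Rdiv_lt_0_compat; lra.
Qed.

Lemma probTau_le_core_at N k m n0 e A0 :
  (1 <= n0)%nat -> (S k <= m <= N)%nat -> 0 < e <= 1/2 -> 1 <= ln (INR N) ->
  (forall n, (1 <= n)%nat -> INR n * r n <= A0) ->
  (forall n, (n0 <= n)%nat -> (1 - e / 8) * a <= INR n * r n) ->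
  1 / 2 * a * ln (INR N) <= RN r N <= (1 + e / 4) * a * ln (INR N) ->
  ln (INR n0) + 2 <= e / 8 * ln (INR N) -> 2 * INR n0 <= ln (INR N) ->
  let s := INR (S k) / ln (INR N) in
  let t := INR m / INR N in
  probTau r N (S k) m <= 2 * A0 / a * (s / t * / INR N) * exp (core_exponent e s t).
Proof.
  intros h0 hm he hL HA0 Hr [hRlo hRup] hn0L hn0L' s t.
  assert (hA0 : 0 <= A0).
  { pose proof (HA0 1%nat (le_n 1)). pose proof (hrpos 1%nat (le_n 1)). simpl in *; lra. }
  assert (hmpos : 0 < INR m) by (apply lt_0_INR; lia).
  assert (hNpos : 0 < INR N) by (apply lt_0_INR; lia).
  assert (hRpos : 0 < RN r N) by (apply RN_pos; auto; lia).
  assert (hs : 0 < s) by (apply Rdiv_lt_0_compat; [apply INR_S_pos | lra]).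
  eapply Rle_trans.
  { apply (probTau_le_exp_defect r N hrpos ltac:(lia) k m ((1 + s) / INR m) (A0 / RN r N)); try lia.
    - left; apply Rdiv_lt_0_compat; lra.
    - apply (npT_le r N hrpos ltac:(lia)); auto. }
  replace ((1 + s) / INR m * INR m) with (1 + s) by (field; lra).
  apply Rmult_le_compat.
  - apply Rmult_le_pos; apply Rdiv_nonneg; try lra. apply pos_INR.
  - left; apply exp_pos.
  - replace (2 * A0 / a * (s / t * / INR N))
      with (INR (S k) / INR m * (A0 / (1 / 2 * a * ln (INR N)))) by (unfold s, t; field; lra).
    apply Rmult_le_compat_l; [apply Rdiv_nonneg; [apply pos_INR | lra]|].
    unfold Rdiv. apply Rmult_le_compat_l; [lra|]. apply Rinv_le_contravar; [nra | lra].
  - apply exp_le, (defect_exponent_le N k m n0 e); auto.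
Qed.

Lemma probTau_le_core : exists K, 0 < K /\ forall e, 0 < e <= 1/2 -> exists N0 : nat,
  forall N k m : nat, (N0 <= N)%nat -> (1 <= k)%nat -> (1 <= m <= N)%nat ->
  let s := INR k / ln (INR N) in
  let t := INR m / INR N in
  probTau r N k m <= K * (s / t * / INR N) * exp (core_exponent e s t).
Proof.
  destruct (nr_bounded r hrpos a ha hrasym) as [A0 [hA0 HA0]].
  destruct (RN_asymptotic r hrpos a ha hrasym (1/2)) as [Nlo HNlo]; [lra|].
  exists (2 * A0 / a). split; [apply Rdiv_lt_0_compat; lra|]. intros e he.
  destruct (RN_asymptotic r hrpos a ha hrasym (e / 4)) as [Nhi HNhi]; [lra|].
  destruct (nr_near_a r a ha hrasym (e / 8)) as [n0 [h0 H0]]; [lra|].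
  destruct (ln_INR_eventually_ge (8 / e * (ln (INR n0) + 2) + 2 * INR n0)) as [Nl HNl].
  exists (Nat.max Nlo (Nat.max Nhi Nl)). intros N k m hN hk hm s t.
  destruct (HNl N ltac:(lia)) as [hN3 hLbig]. pose proof (ln_ge_1 _ hN3) as hL.
  destruct (Nat.lt_ge_cases m k) as [hmk|hkm].
  - rewrite probTau_lt by auto. apply Rmult_le_pos; [|left; apply exp_pos].
    destruct (scaled_params_pos N k m ltac:(apply INR_le; simpl; lra) hk hm) as [hs ht].
    fold s t in hs, ht. apply Rmult_le_pos; [apply Rdiv_nonneg; lra|].
    apply Rmult_le_pos; [apply Rdiv_nonneg; lra | left; apply Rinv_0_lt_compat; lra].
  - destruct k as [|k]; [lia|].
    pose proof (ln_INR_nonneg n0 h0). pose proof (pos_INR n0).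
    assert (0 <= 8 / e * (ln (INR n0) + 2)) by (apply Rmult_le_pos; [apply Rdiv_nonneg|]; lra).
    apply (probTau_le_core_at N k m n0 e A0); auto; try lia.
    + intros n hn. apply H0, hn.
    + split; [destruct (HNlo N ltac:(lia)); lra | apply (HNhi N); lia].
    + apply Rmult_le_reg_l with (8 / e); [apply Rdiv_lt_0_compat; lra|].
      replace (8 / e * (e / 8 * ln (INR N))) with (ln (INR N)) by (field; lra). lra.
    + lra.
Qed.

End Core.

(** * Bounds on [GammaR] and [EulerGamma] *)

Lemma lim_seq_eq (u : nat -> R) (l : R) : Un_cv u l -> lim_seq u = l.
Proof. intros H. unfold lim_seq. apply (UL_sequence u); auto. apply epsilon_spec. now exists l. Qed.

Lemma prodx_S y n : prodx y (S n) = prodx y n * (y + INR (S n)).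
Proof. reflexivity. Qed.

Lemma prodx_pos y n : 0 < y -> 0 < prodx y n.
Proof.
  intros hy; induction n; auto. rewrite prodx_S. pose proof (pos_INR (S n)).
  apply Rmult_lt_0_compat; lra.
Qed.

Lemma prodx_shift y n : prodx (y + 1) n * y = prodx y n * (y + INR n + 1).
Proof.
  induction n; [simpl; ring|]. rewrite !prodx_S, S_INR.
  replace (prodx (y + 1) n * (y + 1 + (INR n + 1)) * y)
    with (prodx (y + 1) n * y * (y + 1 + (INR n + 1))) by ring.
  rewrite IHn. ring.
Qed.

Lemma exp_mul_le_convex (y l : R) : 0 <= y <= 1 -> exp (y * l) <= y * exp l + (1 - y).
Proof.
  intros hy. set (c := y * l).
  assert (exp c * (1 + (l - c)) <= exp l).
  { replace l with (c + (l - c)) at 2 by ring. rewrite exp_plus.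
    apply Rmult_le_compat_l; [left; apply exp_pos | apply exp_ineq1_le]. }
  assert (exp c * (1 + (0 - c)) <= 1).
  { assert (exp c * (1 + (0 - c)) <= exp c * exp (0 - c))
      by (apply Rmult_le_compat_l; [left; apply exp_pos | apply exp_ineq1_le]).
    rewrite <- exp_plus, Rplus_minus, exp_0 in H0. exact H0. }
  assert (exp c = y * (exp c * (1 + (l - c))) + (1 - y) * (exp c * (1 + (0 - c))))
    by (unfold c; ring).
  nra.
Qed.

Lemma Rpower_1p_le (x y : R) : 0 <= x -> 0 <= y <= 1 -> Rpower (1 + x) y <= 1 + y * x.
Proof.
  intros hx hy. unfold Rpower. eapply Rle_trans; [apply exp_mul_le_convex; auto|].
  rewrite exp_ln by lra. lra.
Qed.

Definition gamma_seq (y : R) (n : nat) : R := INR (fact n) * Rpower (INR n) y / prodx y n.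

Lemma gamma_seq_pos y n : 0 < y -> (1 <= n)%nat -> 0 < gamma_seq y n.
Proof.
  intros. apply Rdiv_lt_0_compat; [apply Rmult_lt_0_compat|].
  - apply INR_fact_lt_0.
  - apply exp_pos.
  - now apply prodx_pos.
Qed.

Lemma gamma_seq_shift y n : 0 < y -> (1 <= n)%nat -> gamma_seq (y + 1) n <= y * gamma_seq y n.
Proof.
  intros hy hn. assert (0 < INR n) by (apply lt_0_INR; lia).
  unfold gamma_seq. rewrite Rpower_plus, Rpower_1 by auto.
  pose proof (prodx_pos y n hy). pose proof (INR_fact_lt_0 n).
  assert (0 < Rpower (INR n) y) by apply exp_pos.
  assert (prodx (y + 1) n = prodx y n * (y + INR n + 1) / y) as ->
    by (rewrite <- prodx_shift; field; lra).
  apply Rle_trans with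
    (y * (INR (fact n) * Rpower (INR n) y / prodx y n) * (INR n / (y + INR n + 1))).
  - right. field. repeat split; lra.
  - rewrite <- (Rmult_1_r (y * _)) at 2. apply Rmult_le_compat_l.
    + apply Rmult_le_pos; [lra|]. left; apply Rdiv_lt_0_compat; [apply Rmult_lt_0_compat|]; auto.
    + apply Rdiv_le_of_le_mul; lra.
Qed.

Lemma prodx_ge y n : 0 < y <= 1 -> y * INR (fact n) * Rpower (INR n + 1) y <= prodx y n.
Proof.
  intros hy. induction n.
  - simpl. rewrite Rplus_0_l. unfold Rpower. rewrite ln_1, Rmult_0_r, exp_0. lra.
  - rewrite prodx_S, fact_simpl, mult_INR.
    assert (hn : 0 < INR n + 1) by (pose proof (pos_INR n); lra).
    assert (0 < / (INR n + 1)) by (now apply Rinv_0_lt_compat).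
    assert (Rpower (INR (S n) + 1) y = Rpower (INR n + 1) y * Rpower (1 + / (INR n + 1)) y) as ->.
    { rewrite Rpower_mult_distr by lra. f_equal. rewrite S_INR. field. lra. }
    pose proof (Rpower_1p_le (/ (INR n + 1)) y ltac:(lra) ltac:(lra)).
    assert (0 < Rpower (INR n + 1) y) by apply exp_pos. pose proof (INR_fact_lt_0 n).
    apply Rle_trans with
      (y * INR (fact n) * Rpower (INR n + 1) y * (INR (S n) * (1 + y * / (INR n + 1)))).
    + replace (y * (INR (S n) * INR (fact n))
               * (Rpower (INR n + 1) y * Rpower (1 + / (INR n + 1)) y))
        with (y * INR (fact n) * Rpower (INR n + 1) y * (INR (S n) * Rpower (1 + / (INR n + 1)) y))
        by ring.
      apply Rmult_le_compat_l; [repeat apply Rmult_le_pos; lra|].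
      apply Rmult_le_compat_l; [apply pos_INR | auto].
    + replace (INR (S n) * (1 + y * / (INR n + 1))) with (y + INR (S n))
        by (rewrite S_INR; field; lra).
      apply Rmult_le_compat_r; [rewrite S_INR; lra | auto].
Qed.

Lemma gamma_seq_le_inv y n : 0 < y <= 1 -> (1 <= n)%nat -> gamma_seq y n <= / y.
Proof.
  intros hy hn. pose proof (prodx_ge y n hy). pose proof (INR_fact_lt_0 n).
  assert (0 < INR n) by (apply lt_0_INR; lia).
  assert (Rpower (INR n) y <= Rpower (INR n + 1) y) by (apply Rle_Rpower_l; lra).
  apply Rdiv_le_of_le_mul; [apply prodx_pos; lra|].
  apply Rle_trans with (/ y * (y * INR (fact n) * Rpower (INR n + 1) y)).
  - replace (/ y * (y * INR (fact n) * Rpower (INR n + 1) y))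
      with (INR (fact n) * Rpower (INR n + 1) y) by (field; lra).
    apply Rmult_le_compat_l; lra.
  - apply Rmult_le_compat_l; [left; apply Rinv_0_lt_compat; lra | auto].
Qed.

Lemma gamma_seq_le_Rpower (j : nat) : forall y, 1 < y <= INR j + 2 ->
  forall n, (1 <= n)%nat -> gamma_seq y n <= Rpower y (INR j).
Proof.
  induction j; intros y hy n hn.
  - simpl INR in *. rewrite Rpower_O by lra. replace y with ((y - 1) + 1) by ring.
    eapply Rle_trans; [apply gamma_seq_shift; auto; lra|].
    pose proof (gamma_seq_le_inv (y - 1) n ltac:(lra) hn).
    apply Rle_trans with ((y - 1) * / (y - 1)); [apply Rmult_le_compat_l; lra | right; field; lra].
  - pose proof (pos_INR j). rewrite S_INR in *. destruct (Rle_lt_dec y (INR j + 2)).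
    + eapply Rle_trans; [apply IHj; auto; lra | apply Rle_Rpower; lra].
    + replace y with ((y - 1) + 1) at 1 by ring.
      eapply Rle_trans; [apply gamma_seq_shift; auto; lra|].
      pose proof (IHj (y - 1) ltac:(lra) n hn). pose proof (gamma_seq_pos (y - 1) n ltac:(lra) hn).
      rewrite Rpower_plus, Rpower_1, Rmult_comm by lra.
      assert (Rpower (y - 1) (INR j) <= Rpower y (INR j)) by (apply Rle_Rpower_l; lra).
      apply Rmult_le_compat; lra.
Qed.

Lemma gamma_seq_incr y n : 0 < y -> (1 <= n)%nat -> gamma_seq y n <= gamma_seq y (S n).
Proof.
  intros hy hn. assert (hN : 0 < INR n) by (apply lt_0_INR; lia).
  unfold gamma_seq. rewrite prodx_S, fact_simpl, mult_INR.
  pose proof (prodx_pos y n hy). pose proof (INR_fact_lt_0 n).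
  assert (0 < / INR n) by (now apply Rinv_0_lt_compat).
  assert (Rpower (INR (S n)) y = Rpower (INR n) y * Rpower (1 + / INR n) y) as ->.
  { rewrite Rpower_mult_distr by lra. f_equal. rewrite S_INR. field. lra. }
  assert (B : 1 + y / INR (S n) <= Rpower (1 + / INR n) y).
  { eapply Rle_trans; [|apply exp_ineq1_le]. apply Rplus_le_compat_l.
    apply Rmult_le_compat_l; [lra|]. eapply Rle_trans; [|apply ln_ge_1_sub_inv; lra].
    right. rewrite S_INR. field. lra. }
  assert (0 < Rpower (INR n) y) by apply exp_pos.
  assert (hS : 0 < INR (S n)) by (rewrite S_INR; lra).
  apply Rle_trans with (INR (fact n) * Rpower (INR n) y / prodx y n
                        * ((INR (S n) * (1 + y / INR (S n))) / (y + INR (S n)))).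
  - replace ((INR (S n) * (1 + y / INR (S n))) / (y + INR (S n))) with 1 by (field; lra). lra.
  - replace (INR (S n) * INR (fact n) * (Rpower (INR n) y * Rpower (1 + / INR n) y)
               / (prodx y n * (y + INR (S n))))
      with (INR (fact n) * Rpower (INR n) y / prodx y n
            * ((INR (S n) * Rpower (1 + / INR n) y) / (y + INR (S n)))) by (field; lra).
    apply Rmult_le_compat_l; [apply Rdiv_nonneg; [apply Rmult_le_pos|]; lra|].
    unfold Rdiv. apply Rmult_le_compat_r; [left; apply Rinv_0_lt_compat; lra|].
    apply Rmult_le_compat_l; lra.
Qed.

Lemma GammaR_pos_le_Rpower (y : R) : 1 < y -> 0 < GammaR y /\ GammaR y <= Rpower y y.
Proof.
  intros hy. destruct (nat_between y) as [u [hu1 hu2]]; [lra|].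
  assert (hu : (2 <= u)%nat).
  { assert (INR 1 < INR u) as h by (simpl; lra). apply INR_lt in h. lia. }
  set (j := (u - 1)%nat).
  assert (hj : INR j <= y <= INR j + 2) by (unfold j; rewrite minus_INR by lia; simpl; lra).
  set (v := fun n => gamma_seq y (n + 1)).
  assert (hg : Un_growing v).
  { intros n. unfold v. rewrite Nat.add_succ_l. apply gamma_seq_incr; lia || lra. }
  assert (hb : forall n, v n <= Rpower y (INR j))
    by (intros n; apply gamma_seq_le_Rpower; [lra | lia]).
  destruct (growing_cv v hg) as [l hl]; [exists (Rpower y (INR j)); now intros x [n ->]|].
  assert (GammaR y = l) as -> by (apply lim_seq_eq, (CV_shift _ 1), hl).
  split.
  - pose proof (growing_ineq v l hg hl 0%nat). pose proof (gamma_seq_pos y 1 ltac:(lra) ltac:(lia)).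
    unfold v in H. simpl in H. lra.
  - apply Rle_trans with (Rpower y (INR j)); [|apply Rle_Rpower; lra].
    eapply Rle_cv_lim; [exact hb | exact hl |].
    intros eps he; exists 0%nat; intros; unfold R_dist; rewrite Rminus_diag, Rabs_R0; lra.
Qed.

Lemma EulerGamma_le_1 : EulerGamma <= 1.
Proof.
  set (e := fun n => sumR (S n) (fun i => / INR (S i)) - ln (INR (S n))).
  assert (hd : Un_decreasing e).
  { intros n. unfold e. rewrite (sumR_S (S n)). pose proof (ln_S_sub_ge_inv n). lra. }
  assert (hlb : has_lb e).
  { exists 0. intros x [n ->]. unfold e, opp_seq. pose proof (harmonic_tail_ge 1 (le_n 1) (S n)).
    rewrite (sumR_ext _ _ (fun i => / INR (S i))) in H.
    2:{ intros i hi. now rewrite (proj2 (Nat.leb_le 1 (S i))) by lia. }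
    simpl INR in H at 2. rewrite ln_1 in H.
    assert (ln (INR (S n)) <= ln (INR (S n) + 1)) by (apply ln_le; [apply INR_S_pos | lra]). lra. }
  destruct (decreasing_cv e hd hlb) as [l hl].
  assert (EulerGamma = l) as -> by (apply lim_seq_eq, hl).
  pose proof (decreasing_ineq e l hd hl 0%nat). unfold e in H. simpl in H. rewrite ln_1 in H. lra.
Qed.

Lemma linear_sub_mul_ln_le (A B s : R) : 0 < A -> 0 < B -> 0 < s ->
  A * s - B * s * ln (1 + s) <= A * exp (A / B).
Proof.
  intros hA hB hs. pose proof (ln_1p_nonneg s ltac:(lra)). pose proof (exp_pos (A / B)).
  destruct (Rle_lt_dec (A / B) (ln (1 + s))) as [hbig|hsmall].
  - assert (A <= B * ln (1 + s)).
    { apply Rmult_le_reg_r with (/ B); [now apply Rinv_0_lt_compat|].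
      replace (B * ln (1 + s) * / B) with (ln (1 + s)) by (field; lra). exact hbig. }
    assert (A * s <= B * ln (1 + s) * s) by (apply Rmult_le_compat_r; lra). nra.
  - apply exp_increasing in hsmall. rewrite exp_ln in hsmall by lra.
    assert (A * s <= A * exp (A / B)) by (apply Rmult_le_compat_l; lra).
    assert (0 <= B * s * ln (1 + s)) by (repeat apply Rmult_le_pos; lra). lra.
Qed.

Lemma core_exponent_le_power (e eps s t : R) :
  0 < e <= 1/2 -> e <= eps -> 0 < s -> 0 < t <= 1 ->
  core_exponent e s t <= 4 + 3 * exp 6 + (1 - eps) * s * ln t - 1/4 * s * logp (1/4 * s).
Proof.
  intros he heps hs ht. unfold core_exponent.
  assert (hlt : ln t <= 0) by (rewrite <- ln_1; apply ln_le; lra).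
  pose proof (ln_1p_nonneg s ltac:(lra)).
  pose proof (linear_sub_mul_ln_le 3 (1/2) s ltac:(lra) ltac:(lra) hs).
  replace (3 / (1 / 2)) with 6 in H0 by field.
  assert (logp (1/4 * s) <= ln (1 + s)) by (apply Rmax_lub; [apply ln_le|]; lra).
  assert (0 <= (eps - e / 2) * s * (- ln t)) by (apply Rmult_le_pos; [apply Rmult_le_pos|]; lra).
  assert (3/4 * s * ln (1 + s) <= (1 - e / 2) * s * ln (1 + s))
    by (apply Rmult_le_compat_r; [|apply Rmult_le_compat_r]; lra).
  assert (1/4 * s * logp (1/4 * s) <= 1/4 * s * ln (1 + s)) by (apply Rmult_le_compat_l; lra).
  nra.
Qed.

Lemma core_exponent_le_dickman (s t : R) : 0 < s -> 0 < t <= 1 ->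
  core_exponent (1/2) s t + (1/4 * s + 1) * ln (1/4 * s + 1)
    <= 4 + 17/4 * exp (17/2) + 1/4 * s * ln t - EulerGamma * (1/4 * s).
Proof.
  intros hs ht. unfold core_exponent.
  assert (hlt : ln t <= 0) by (rewrite <- ln_1; apply ln_le; lra).
  pose proof (ln_1p_nonneg s ltac:(lra)). pose proof (ln_1p_le s ltac:(lra)).
  pose proof (linear_sub_mul_ln_le (17/4) (1/2) s ltac:(lra) ltac:(lra) hs).
  replace (17 / 4 / (1 / 2)) with (17/2) in H1 by field.
  assert (ln (1/4 * s + 1) <= ln (1 + s)) by (apply ln_le; lra).
  assert ((1/4 * s + 1) * ln (1/4 * s + 1) <= (1/4 * s + 1) * ln (1 + s))
    by (apply Rmult_le_compat_l; lra).
  pose proof EulerGamma_le_1.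
  assert (0 <= s * (1 - EulerGamma)) by (apply Rmult_le_pos; lra).
  assert (0 <= s * (- ln t)) by (apply Rmult_le_pos; lra).
  nra.
Qed.

Section Corollaries.
Variable r : nat -> R.
Variable a : R.
Hypothesis ha : 0 < a.
Hypothesis hrpos : forall n : nat, (1 <= n)%nat -> 0 < r n.
Hypothesis hrasym : Un_cv (fun n => INR n * r n) a.

Lemma probTau_le_power : exists C, 0 < C /\
  forall eps : R, 0 < eps -> exists Neps : nat, forall N k m : nat,
    (Neps <= N)%nat -> (1 <= k)%nat -> (1 <= m <= N)%nat ->
    let s := INR k / ln (INR N) in
    let t := INR m / INR N in
    probTau r N k m <=
      C * / INR N * (s / t) * Rpower t ((1 - eps) * s) * exp (- (1/4) * s * logp (1/4 * s)).
Proof.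
  destruct (probTau_le_core r a ha hrpos hrasym) as [K [hK HK]].
  exists (K * exp (4 + 3 * exp 6)). split; [apply Rmult_lt_0_compat; [lra | apply exp_pos]|].
  intros eps heps. set (e := Rmin eps (1/2)).
  assert (he : 0 < e <= 1/2) by (split; [apply Rmin_glb_lt | apply Rmin_r]; lra).
  destruct (HK e he) as [N0 HN0]. exists (Nat.max N0 3). intros N k m hN hk hm s t.
  pose proof (HN0 N k m ltac:(lia) hk hm) as B. cbv zeta in B. fold s t in B.
  destruct (scaled_params_pos N k m ltac:(lia) hk hm) as [hs ht]. fold s t in hs, ht.
  eapply Rle_trans; [exact B|]. unfold Rpower.
  replace (K * exp (4 + 3 * exp 6) * / INR N * (s / t) * exp ((1 - eps) * s * ln t)
             * exp (- (1/4) * s * logp (1/4 * s)))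
    with (K * (s / t * / INR N)
          * exp (4 + 3 * exp 6 + (1 - eps) * s * ln t - 1/4 * s * logp (1/4 * s)))
    by (unfold Rminus; rewrite !exp_plus; ring_simplify; do 2 f_equal; ring).
  apply Rmult_le_compat_l.
  - apply Rmult_le_pos; [lra|].
    apply Rmult_le_pos; [apply Rdiv_nonneg; lra | left; apply Rinv_0_lt_compat, lt_0_INR; lia].
  - apply exp_le, core_exponent_le_power; auto. apply Rmin_l.
Qed.

Lemma probTau_le_dickman : exists C', 0 < C' /\
  exists N0 : nat, forall N k m : nat,
    (N0 <= N)%nat -> (1 <= k)%nat -> (1 <= m <= N)%nat ->
    let s := INR k / ln (INR N) in
    let t := INR m / INR N in
    probTau r N k m <= C' * / INR N * dickman_f01 (1/4 * s) t.
Proof.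
  destruct (probTau_le_core r a ha hrpos hrasym) as [K [hK HK]].
  set (W := 4 + 17/4 * exp (17/2)).
  exists (4 * K * exp W). split; [apply Rmult_lt_0_compat; [lra | apply exp_pos]|].
  destruct (HK (1/2) ltac:(lra)) as [N0 HN0]. exists (Nat.max N0 3). intros N k m hN hk hm s t.
  pose proof (HN0 N k m ltac:(lia) hk hm) as B. cbv zeta in B. fold s t in B.
  destruct (scaled_params_pos N k m ltac:(lia) hk hm) as [hs ht]. fold s t in hs, ht.
  assert (hNpos : 0 < INR N) by (apply lt_0_INR; lia).
  destruct (GammaR_pos_le_Rpower (1/4 * s + 1)) as [hG1 hG2]; [lra|].
  eapply Rle_trans; [exact B|]. unfold dickman_f01, Rpower at 1.
  replace (4 * K * exp W * / INR N
           * (1/4 * s * exp ((1/4 * s - 1) * ln t) * exp (- EulerGamma * (1/4 * s))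
              / GammaR (1/4 * s + 1)))
    with (K * (s / t * / INR N)
          * (exp (W + 1/4 * s * ln t - EulerGamma * (1/4 * s)) / GammaR (1/4 * s + 1))).
  2:{ assert (exp ((1/4 * s - 1) * ln t) = exp (1/4 * s * ln t) / t) as ->.
      { replace ((1/4 * s - 1) * ln t) with (1/4 * s * ln t + - ln t) by ring.
        rewrite exp_plus, exp_Ropp, exp_ln by lra. reflexivity. }
      assert (exp (W + 1/4 * s * ln t - EulerGamma * (1/4 * s))
              = exp W * exp (1/4 * s * ln t) * exp (- EulerGamma * (1/4 * s))) as ->.
      { rewrite <- !exp_plus. f_equal. ring. }
      field. repeat split; lra. }
  apply Rmult_le_compat_l.
  { apply Rmult_le_pos; [lra|].
    apply Rmult_le_pos; [apply Rdiv_nonneg; lra | left; now apply Rinv_0_lt_compat]. }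
  apply Rle_div_of_mul_le; auto.
  apply Rle_trans with (exp (core_exponent (1/2) s t) * Rpower (1/4 * s + 1) (1/4 * s + 1)).
  - apply Rmult_le_compat_l; [left; apply exp_pos | exact hG2].
  - unfold Rpower, W. rewrite <- exp_plus. apply exp_le.
    now apply core_exponent_le_dickman.
Qed.

End Corollaries.

Theorem mainTheorem13 (r : nat -> R) (a : R)
  (ha : 0 < a)
  (hrpos : forall n : nat, (1 <= n)%nat -> 0 < r n)
  (hrasym : Un_cv (fun n => INR n * r n) a) :
  exists C c : R, 0 < C /\ 0 < c < 1 /\
    (forall eps : R, 0 < eps ->
       exists Neps : nat, forall N k m : nat,
         (Neps <= N)%nat -> (1 <= k)%nat -> (1 <= m <= N)%nat ->
         let s := INR k / ln (INR N) in
         let t := INR m / INR N in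
         probTau r N k m <=
           C * / INR N * (s / t) * Rpower t ((1 - eps) * s)
             * exp (- c * s * logp (c * s))) /\
    (exists C' : R, 0 < C' /\
       exists N0 : nat, forall N k m : nat,
         (N0 <= N)%nat -> (1 <= k)%nat -> (1 <= m <= N)%nat ->
         let s := INR k / ln (INR N) in
         let t := INR m / INR N in
         probTau r N k m <= C' * / INR N * dickman_f01 (c * s) t).
Proof.
  destruct (probTau_le_power r a ha hrpos hrasym) as [C [hC HC]].
  exists C, (1/4). repeat split; [exact hC | lra | lra | exact HC |].
  exact (probTau_le_dickman r a ha hrpos hrasym).
Qed.
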